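(* Let $n\ge1$ and $\pi\in S_n$, and set $w=\hat\pi$. The following are equivalent: (a) $\pi\in\mathcal C_n(321)$; (b) $\hat\pi_1=n$ and $N_{2\,\underline{31}}(w)+N_{\underline{14}\,\underline{23}}(w)+N_{\underline{41}\,\underline{32}}(w)-N_{\underline{24}\,\underline{13}}(w)-N_{\underline{31}\,\underline{42}}(w)=0$; (c) $\hat\pi_1=n$ and $N_{\underline{231}}(w)+N_{\underline{23}\,\underline{41}}(w)+N_{\underline{24}\,\underline{31}}(w)+N_{\underline{32}\,\underline{41}}(w)+N_{\underline{14}\,\underline{23}}(w)+N_{\underline{41}\,\underline{32}}(w)-N_{\underline{24}\,\underline{13}}(w)=0$.
   Context: Permutations of $[n]$ are written in one-line notation $\pi=\pi_1\cdots\pi_n$. A permutation contains $321$ if there are $i<j<k$ with $\pi_i>\pi_j>\pi_k$. $\mathcal C_n$ is the set of cyclic permutations of $[n]$ (a single $n$-cycle), and $\mathcal C_n(321)$ those avoiding $321$. The standard cycle notation of $\pi$ writes each cycle with its largest element first, as $(m,\pi(m),\pi^2(m),\dots)$, and lists the cycles in increasing order of their largest elements. $\theta:S_n\to S_n$ sends $\pi$ to the permutation whose one-line notation is the standard cycle notation of $\pi$ with parentheses erased; $\hat\pi=\theta(\pi)$. Pattern counts, for a sequence $w=w_1\cdots w_N$ of distinct integers (all pairs $(i,j)$ below range over $i+2\le j\le N-1$ unless stated otherwise): $N_{2\,\underline{31}}(w)=\#\{(i,j):1\le i<j\le N-1,\ w_{j+1}<w_i<w_j\}$; $N_{\underline{231}}(w)=\#\{i: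 i+2\le N,\ w_{i+2}<w_i<w_{i+1}\}$; $N_{\underline{14}\,\underline{23}}(w)=\#\{(i,j): w_i<w_j<w_{j+1}<w_{i+1}\}$; $N_{\underline{41}\,\underline{32}}(w)=\#\{(i,j): w_{i+1}<w_{j+1}<w_j<w_i\}$; $N_{\underline{24}\,\underline{13}}(w)=\#\{(i,j): w_j<w_i<w_{j+1}<w_{i+1}\}$; $N_{\underline{31}\,\underline{42}}(w)=\#\{(i,j): w_{i+1}<w_{j+1}<w_i<w_j\}$; $N_{\underline{23}\,\underline{41}}(w)=\#\{(i,j): w_{j+1}<w_i<w_{i+1}<w_j\}$; $N_{\underline{24}\,\underline{31}}(w)=\#\{(i,j): w_{j+1}<w_i<w_j<w_{i+1}\}$; $N_{\underline{32}\,\underline{41}}(w)=\#\{(i,j): w_{j+1}<w_{i+1}<w_i<w_j\}$. *)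

From mathcomp Require Import all_boot all_order all_algebra all_fingroup.
Set Implicit Arguments. Unset Strict Implicit. Unset Printing Implicit Defensive.

(* Permutations of [n] are modelled by s : 'S_n acting on 'I_n = {0,...,n-1};
   the one-line value pi_i (1-based) corresponds to (s (i-1)) + 1. *)

Definition contains321 n (s : 'S_n) : bool :=
  [exists i : 'I_n, exists j : 'I_n, exists k : 'I_n,
     [&& i < j, j < k, s k < s j & s j < s i]].

Definition is_cyclic n (s : 'S_n) : bool := #|porbits s| == 1.

Definition in_C321 n (s : 'S_n) : bool := is_cyclic s && ~~ contains321 s.

Definition cycle_max n (s : 'S_n) (m : 'I_n) : bool :=
  [forall y in porbit s m, y <= m].

Definition cycle_word n (s : 'S_n) (m : 'I_n) : seq 'I_n :=
  traject s m #|porbit s m|.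

(* standard cycle notation with parentheses erased: cycles led by their
   maxima, listed in increasing order of maxima (enum 'I_n is increasing) *)
Definition theta_seq n (s : 'S_n) : seq 'I_n :=
  flatten [seq cycle_word s m | m <- enum 'I_n & cycle_max s m].

Definition hat n (s : 'S_n) : seq nat := [seq (val x).+1 | x <- theta_seq s].

(* 1-based access w_i *)
Definition wat (w : seq nat) (i : nat) : nat := nth 0 w i.-1.

Definition pair_count (w : seq nat) (P : nat -> nat -> bool) : nat :=
  \sum_(1 <= i < size w) \sum_(i.+2 <= j < size w) P i j.

Definition N_2_31 (w : seq nat) : nat :=
  \sum_(1 <= i < size w) \sum_(i.+1 <= j < size w)
     ((wat w j.+1 < wat w i) && (wat w i < wat w j)).

Definition N_231 (w : seq nat) : nat :=
  \sum_(1 <= i < (size w).-1) ((wat w i.+2 < wat w i) && (wat w i < wat w i.+1)).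

Definition N_14_23 w := pair_count w (fun i j =>
  [&& wat w i < wat w j, wat w j < wat w j.+1 & wat w j.+1 < wat w i.+1]).
Definition N_41_32 w := pair_count w (fun i j =>
  [&& wat w i.+1 < wat w j.+1, wat w j.+1 < wat w j & wat w j < wat w i]).
Definition N_24_13 w := pair_count w (fun i j =>
  [&& wat w j < wat w i, wat w i < wat w j.+1 & wat w j.+1 < wat w i.+1]).
Definition N_31_42 w := pair_count w (fun i j =>
  [&& wat w i.+1 < wat w j.+1, wat w j.+1 < wat w i & wat w i < wat w j]).
Definition N_23_41 w := pair_count w (fun i j =>
  [&& wat w j.+1 < wat w i, wat w i < wat w i.+1 & wat w i.+1 < wat w j]).
Definition N_24_31 w := pair_count w (fun i j =>
  [&& wat w j.+1 < wat w i, wat w i < wat w j & wat w j < wat w i.+1]).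
Definition N_32_41 w := pair_count w (fun i j =>
  [&& wat w j.+1 < wat w i.+1, wat w i.+1 < wat w i & wat w i < wat w j]).

From mathcomp Require Import all_boot all_order all_algebra all_fingroup.
From mathcomp Require Import zify.
Set Implicit Arguments. Unset Strict Implicit. Unset Printing Implicit Defensive.

(* For a cyclic permutation the standard cycle notation is the single cycle read
   from n, so hat pi starts with n; conversely, as cycles are listed by increasing
   maxima, if hat pi starts with n then n is the maximum of every cycle.
   For any word w of distinct letters, classifying for each i the descents
   w_(j+1) < w_i < w_j (j > i) by the position of w_(i+1), and counting the
   crossings of the level w_i by w_(i+1) ... w_N, shows that both alternating sums
   equal the nonnegative count
     N_witness w = N_14_23 + N_41_32 + N_23_14 + N_32_41 + #{i | w_N < w_i < w_(i+1)}.
   A permutation whose only possible fixed point is 0 contains 321 iff it has an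
   inversion x < y, pi y < pi x with y an excedance or x a deficiency (the third
   letter is found by pigeonhole).  Reading such a pair along the cycle word of a
   cyclic pi produces exactly one of the five patterns counted by N_witness; the
   last one arises when the cycle wraps around from its last letter back to n. *)

(** * Pattern identities for words of distinct letters *)

Lemma crossings_balance (f : nat -> nat) v a b : a <= b ->
    (forall k, a <= k <= b -> f k != v) ->
  \sum_(a <= k < b) ((f k.+1 < v) && (v < f k)) + (v < f b) =
  \sum_(a <= k < b) ((f k < v) && (v < f k.+1)) + (v < f a).
Proof.
elim: b => [|b IHb] le_ab fv.
  by move: le_ab; rewrite leqn0 => /eqP->; rewrite !big_geq.
have [<- | ne_ab] := eqVneq a b.+1; first by rewrite !big_geq.
have le_ab' : a <= b by lia.
have fv' k : a <= k <= b -> f k != v by move=> ?; apply: fv; lia.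
have fb : f b != v by apply: fv; lia.
have fb1 : f b.+1 != v by apply: fv; lia.
by rewrite !big_nat_recr //=; have := IHb le_ab' fv'; lia.
Qed.

Lemma crossing_patterns a b c d : uniq [:: a; b; c; d] ->
  [&& c < a, a < d & d < b] + [&& b < d, d < a & a < c]
  + [&& c < a, a < b & b < d] + [&& d < b, b < a & a < c]
  = if a < b then (c < a) && (a < d) else (d < a) && (a < c).
Proof.
rewrite /= !inE !negb_or => /and4P[/and3P[ab ac ad] /andP[bc bd] cd _].
by case: (ltngtP a b) => ?; case: (ltngtP a c) => ?; case: (ltngtP a d) => ?;
   case: (ltngtP b c) => ?; case: (ltngtP b d) => ?; case: (ltngtP c d) => ?; lia.
Qed.

Lemma descent_patterns a b c d : uniq [:: a; b; c; d] ->
  [&& d < a, a < b & b < c] + [&& d < a, a < c & c < b]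
  + [&& d < b, b < a & a < c] + [&& b < d, d < a & a < c] = (d < a) && (a < c).
Proof.
rewrite /= !inE !negb_or => /and4P[/and3P[ab ac ad] /andP[bc bd] cd _].
by case: (ltngtP a b) => ?; case: (ltngtP a c) => ?; case: (ltngtP a d) => ?;
   case: (ltngtP b c) => ?; case: (ltngtP b d) => ?; case: (ltngtP c d) => ?; lia.
Qed.

Lemma sum_nat_gt0P (F : nat -> nat) a b :
  reflect (exists2 k, a <= k < b & 0 < F k) (0 < \sum_(a <= k < b) F k).
Proof.
rewrite lt0n sum_nat_seq_neq0; apply: (iffP hasP) => -[k].
  by rewrite mem_index_iota -lt0n; exists k.
by rewrite -mem_index_iota lt0n; exists k.
Qed.

Lemma pair_count_gt0P w (P : nat -> nat -> bool) :
  reflect (exists i j, [/\ 0 < i, i.+2 <= j < size w & P i j]) (0 < pair_count w P).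
Proof.
apply: (iffP (sum_nat_gt0P _ _ _)) => [[i /andP[i_gt0 _] /sum_nat_gt0P[j jN]] |].
  by rewrite lt0b => Pij; exists i, j.
case=> i [j [i_gt0 /andP[ij jN] Pij]]; exists i; first lia.
by apply/sum_nat_gt0P; exists j; rewrite ?ij ?lt0b.
Qed.

Definition N_23_14 (w : seq nat) : nat := pair_count w (fun i j =>
  [&& wat w j < wat w i, wat w i < wat w i.+1 & wat w i.+1 < wat w j.+1]).
Definition N_23_end (w : seq nat) : nat :=
  \sum_(1 <= i < size w) [&& wat w (size w) < wat w i & wat w i < wat w i.+1].
Definition N_witness (w : seq nat) : nat :=
  N_14_23 w + N_41_32 w + N_23_14 w + N_32_41 w + N_23_end w.

Section Sequence.
Variable w : seq nat.
Local Notation f := (wat w).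
Local Notation N := (size w).

Lemma N_2_31_split : N_2_31 w =
  N_231 w + pair_count w (fun i j => (f j.+1 < f i) && (f i < f j)).
Proof.
rewrite /N_2_31 /N_231 /pair_count.
case: (ltnP 1 N) => [N_gt1 | N_le1]; last by rewrite !big_geq //; lia.
have [M eN] : exists M, N = M.+1 by exists N.-1; lia.
have M_gt0 : 0 < M by lia.
rewrite eN !(big_nat_recr _ _ _ M_gt0) /=.
rewrite [X in _ + X = _]big_geq // [X in _ = _ + (_ + X)]big_geq // !addn0.
by rewrite -big_split; apply: eq_big_nat => i /andP[_ iM]; rewrite big_ltn.
Qed.

Hypothesis w_uniq : uniq w.

Lemma wat_eq k l : 0 < k <= N -> 0 < l <= N -> (f k == f l) = (k == l).
Proof. by case: k l => [|k] [|l] //= kN lN; rewrite /wat /= nth_uniq. Qed.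

Lemma wat_inj : {in [pred k | 0 < k <= N] &, injective f}.
Proof. by move=> k l kN lN /eqP; rewrite wat_eq // => /eqP. Qed.

Lemma uniq_wat4 i j : 0 < i -> i.+1 < j -> j < N ->
  uniq [:: f i; f i.+1; f j; f j.+1].
Proof.
move=> i_gt0 ij jN.
rewrite -[[:: f i; _; _; _]]/(map f [:: i; i.+1; j; j.+1]) map_inj_in_uniq.
  by rewrite /= !inE; lia.
by apply: sub_in2 wat_inj => k; rewrite !inE; lia.
Qed.

Lemma N_2_31_row_decomp i : 0 < i < N ->
  \sum_(i.+1 <= j < N) ((f j.+1 < f i) && (f i < f j)) =
  \sum_(i.+2 <= j < N)
    ([&& f j < f i, f i < f j.+1 & f j.+1 < f i.+1]
     + [&& f i.+1 < f j.+1, f j.+1 < f i & f i < f j]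
     + [&& f j < f i, f i < f i.+1 & f i.+1 < f j.+1]
     + [&& f j.+1 < f i.+1, f i.+1 < f i & f i < f j])
  + [&& f N < f i & f i < f i.+1].
Proof.
case/andP=> i_gt0 iN.
have [<- | iN1] := eqVneq i.+1 N; first by rewrite !big_geq //; case: ltngtP.
have {iN iN1} iN : i.+1 < N by lia.
under (@eq_big_nat _ _ _ i.+2 N) => j /andP[ij jN]
  do rewrite (crossing_patterns (uniq_wat4 i_gt0 ij jN)).
case asc: (f i < f i.+1); last by rewrite big_ltn //; lia.
have avoid k : i < k <= N -> f k != f i by move=> ?; rewrite wat_eq; lia.
have := crossings_balance (ltnW iN) avoid.
rewrite [in X in _ = X -> _]big_ltn //.
have : f N != f i by apply: avoid; lia.
lia.
Qed.

Lemma N_2_31_decomp :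
  N_2_31 w = N_24_13 w + N_31_42 w + N_23_14 w + N_32_41 w + N_23_end w.
Proof.
rewrite /N_2_31 /N_24_13 /N_31_42 /N_23_14 /N_32_41 /N_23_end /pair_count.
rewrite -!big_split; apply: eq_big_nat => i iN /=.
by rewrite N_2_31_row_decomp // -!big_split.
Qed.

Lemma N_2_31_descents :
  N_231 w + N_23_41 w + N_24_31 w + N_32_41 w + N_31_42 w = N_2_31 w.
Proof.
rewrite N_2_31_split /N_23_41 /N_24_31 /N_32_41 /N_31_42 /pair_count -!addnA.
congr (_ + _); rewrite -!big_split; apply: eq_big_nat => i /andP[i_gt0 iN] /=.
rewrite -!big_split; apply: eq_big_nat => j /andP[ij jN] /=.
by rewrite !addnA descent_patterns // uniq_wat4.
Qed.

Lemma N_sum_B_eq_witness :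
  ((N_2_31 w)%:Z + (N_14_23 w)%:Z + (N_41_32 w)%:Z
     - (N_24_13 w)%:Z - (N_31_42 w)%:Z = (N_witness w)%:Z)%R.
Proof. by rewrite N_2_31_decomp /N_witness; lia. Qed.

Lemma N_sum_C_eq_witness :
  ((N_231 w)%:Z + (N_23_41 w)%:Z + (N_24_31 w)%:Z + (N_32_41 w)%:Z
     + (N_14_23 w)%:Z + (N_41_32 w)%:Z - (N_24_13 w)%:Z = (N_witness w)%:Z)%R.
Proof. by have := N_2_31_descents; rewrite N_2_31_decomp /N_witness; lia. Qed.
End Sequence.

(** * 321-patterns and their witnesses *)

Definition witness321 n (s : 'S_n) (x y : 'I_n) : bool :=
  [&& x < y, s y < s x & (y < s y) || (s x < x)].

(* Conjugation by i |-> n - 1 - i, exchanging excedances and deficiencies. *)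
Definition rev_conj n (s : 'S_n) : 'S_n :=
  perm (inj_comp (@rev_ord_inj n) (inj_comp (@perm_inj _ s) (@rev_ord_inj n))).

Lemma rev_conjE n (s : 'S_n) x : rev_conj s x = rev_ord (s (rev_ord x)).
Proof. by rewrite permE. Qed.

Lemma card_ord_ltn n k : k <= n -> #|[set v : 'I_n | v < k]| = k.
Proof.
move=> kn; have widen_inj : injective (widen_ord kn).
  by move=> u v /(congr1 val) /= /val_inj.
rewrite -[RHS](card_ord k) -(card_imset _ widen_inj).
congr #|pred_of_set _|; apply/setP => v; rewrite inE.
apply/idP/imsetP => [vk | [u _ ->]]; last exact: (ltn_ord u).
by exists (Ordinal vk); last exact: val_inj.
Qed.

Lemma excedance_321_right n (s : 'S_n) (x y : 'I_n) :
  x < y -> s y < s x -> y < s y -> exists2 z : 'I_n, y < z & s z < s y.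
Proof.
move=> lt_xy lt_syx lt_ysy.
suff /existsP[z /andP[]] : [exists z : 'I_n, (y < z) && (s z < s y)] by exists z.
apply: contraT; rewrite negb_exists => /forallP noz.
have small_sub : s @^-1: [set v : 'I_n | v < s y] \subset [set z : 'I_n | z < y] :\ x.
  apply/subsetP => z; rewrite !inE => lt_szy; have := noz z.
  rewrite negb_and -leqNgt lt_szy orbF => le_zy.
  rewrite ltn_neqAle le_zy andbT; apply/andP; split.
    by apply: contraTneq lt_szy => ->; rewrite -leqNgt ltnW.
  by apply: contraTneq lt_szy => /val_inj ->; rewrite ltnn.
have := subset_leq_card small_sub.
rewrite card_preimset ?card_ord_ltn; [|exact: ltnW|exact: perm_inj].
have := cardsD1 x [set z : 'I_n | z < y].
rewrite inE lt_xy (card_ord_ltn (ltnW (ltn_ord y))) => card_y card_sub.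
by set c := #|_ :\ x| in card_y card_sub; lia.
Qed.

Lemma deficiency_321_left n (s : 'S_n) (x y : 'I_n) :
  x < y -> s y < s x -> s x < x -> exists2 z : 'I_n, z < x & s x < s z.
Proof.
have := ltn_ord x; have := ltn_ord y; have := ltn_ord (s x); have := ltn_ord (s y).
move=> *.
have [|||z yz sz] := @excedance_321_right n (rev_conj s) (rev_ord y) (rev_ord x).
- by rewrite /=; lia.
- by rewrite !rev_conjE !rev_ordK /=; lia.
- by rewrite rev_conjE rev_ordK /=; lia.
exists (rev_ord z); move: yz sz; rewrite !rev_conjE rev_ordK /=; have := ltn_ord z;
  have := ltn_ord (s (rev_ord z)); lia.
Qed.

Lemma contains321_witness n (s : 'S_n) : (forall x : 'I_n, 0 < x -> s x != x) ->
  contains321 s = [exists x, exists y, witness321 s x y].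
Proof.
move=> no_fix; apply/existsP/existsP => [[i] | [x]].
  case/existsP=> j /existsP[k /and4P[lt_ij lt_jk lt_skj lt_sji]].
  have : nat_of_ord (s j) != j by apply: no_fix; apply: leq_ltn_trans lt_ij.
  case: ltngtP => // [lt_sjj | lt_jsj] _.
    by exists j; apply/existsP; exists k; rewrite /witness321 lt_jk lt_skj lt_sjj orbT.
  by exists i; apply/existsP; exists j; rewrite /witness321 lt_ij lt_sji lt_jsj.
case/existsP=> y /and3P[lt_xy lt_syx /orP[exc | def]].
  have [z lt_yz lt_szy] := excedance_321_right lt_xy lt_syx exc.
  exists x; apply/existsP; exists y; apply/existsP; exists z.
  by rewrite lt_xy lt_yz lt_szy lt_syx.
have [z lt_zx lt_sxz] := deficiency_321_left lt_xy lt_syx def.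
exists z; apply/existsP; exists x; apply/existsP; exists y.
by rewrite lt_zx lt_xy lt_syx lt_sxz.
Qed.

(** * Cyclic permutations and their cycle word *)

Section HatHead.
Variables (n : nat) (s : 'S_n.+1).
Local Notation m := (@ord_max n).

Lemma cycle_max_ord_max : cycle_max s m.
Proof. by apply/forallP => y; apply/implyP => _; exact: leq_ord. Qed.

Lemma exists_cycle_max x : exists2 M, M \in porbit s x & cycle_max s M.
Proof.
case: (arg_maxnP val (porbit_id s x)) => M xM M_max; exists M => //.
apply/forallP => y; apply/implyP; rewrite (eqP (etrans (eq_porbit_mem _ _ _) xM)).
exact: M_max.
Qed.

Lemma cycle_wordE x : cycle_word s x = x :: traject s (s x) #|porbit s x|.-1.
Proof. by rewrite /cycle_word; case: #|_| (card_porbit_neq0 s x). Qed.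

Lemma hat_head_cycle_max : wat (hat s) 1 = n.+1 ->
  forall x, cycle_max s x -> x = m.
Proof.
move=> head_n x x_max; apply/val_inj/eqP; rewrite /= eqn_leq leq_ord leqNgt.
apply/negP => lt_xn; move: head_n.
rewrite /wat /hat /theta_seq enum_ordSr filter_rcons cycle_max_ord_max.
case eL : [seq y <- _ | cycle_max s y] => [|y L].
  suff : x \in [::] by [].
  rewrite -eL mem_filter x_max; apply/mapP; exists (Ordinal lt_xn); rewrite ?mem_enum //.
  exact: val_inj.
have : y \in [seq y <- [seq widen_ord (leqnSn n) i | i <- enum 'I_n] | cycle_max s y].
  by rewrite eL mem_head.
rewrite mem_filter => /andP[_ /mapP[y' _ ->]] /=.
by rewrite cycle_wordE /= => -[]; have := ltn_ord y'; lia.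
Qed.

Lemma cyclic_of_hat_head : wat (hat s) 1 = n.+1 -> is_cyclic s.
Proof.
move=> head_n; apply/cards1P; exists (porbit s m); apply/setP => O; rewrite inE.
apply/imsetP/eqP => [[x _ ->] | ->]; last by exists m.
have [M xM /(hat_head_cycle_max head_n) eM] := exists_cycle_max x.
by apply/eqP; rewrite eq_porbit_mem porbit_sym -eM.
Qed.
End HatHead.

Section Cyclic.
Variables (n : nat) (s : 'S_n.+1).
Hypothesis s_cyclic : is_cyclic s.
Local Notation m := (@ord_max n).
(* [e k] is the letter at 0-based position k of the cycle word read from n, so
   that [wat (hat s) k.+1 = (e k).+1]; for k = n.+1 the cycle wraps back to n. *)
Local Notation e k := (nat_of_ord (iter k s m)).

Lemma porbit_cyclic x y : x \in porbit s y.
Proof.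
case/cards1P: s_cyclic => O porbitsE.
have /[!(porbitsE, inE)] /eqP Ox : porbit s x \in porbits s by apply: imset_f.
have /[!(porbitsE, inE)] /eqP Oy : porbit s y \in porbits s by apply: imset_f.
by rewrite Oy -Ox porbit_id.
Qed.

Lemma card_porbit_cyclic x : #|porbit s x| = n.+1.
Proof.
rewrite -[RHS](card_ord n.+1) -cardsT; congr #|pred_of_set _|.
by apply/setP => y; rewrite inE porbit_cyclic.
Qed.

Lemma theta_seq_cyclic : theta_seq s = traject s m n.+1.
Proof.
rewrite /theta_seq (@eq_filter _ _ (pred1 m)).
  by rewrite filter_pred1_uniq ?enum_uniq ?mem_enum //= cats0 /cycle_word card_porbit_cyclic.
move=> x /=; apply/idP/eqP => [x_max | ->]; last exact: cycle_max_ord_max.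
apply/val_inj/eqP; rewrite /= eqn_leq leq_ord.
by move/forallP/(_ m)/implyP: x_max; apply; apply: porbit_cyclic.
Qed.

Lemma hat_cyclic : hat s = [seq (val x).+1 | x <- traject s m n.+1].
Proof. by rewrite /hat theta_seq_cyclic. Qed.

Lemma size_hat_cyclic : size (hat s) = n.+1.
Proof. by rewrite hat_cyclic size_map size_traject. Qed.

Lemma wat_hat_cyclic k : k <= n -> wat (hat s) k.+1 = (e k).+1.
Proof. by move=> le_kn; rewrite /wat /= hat_cyclic (nth_map m) ?size_traject ?nth_traject. Qed.

Lemma uniq_traject_cyclic : uniq (traject s m n.+1).
Proof. by have := uniq_traject_porbit s m; rewrite card_porbit_cyclic. Qed.

Lemma uniq_hat_cyclic : uniq (hat s).
Proof.
rewrite hat_cyclic map_inj_uniq ?uniq_traject_cyclic //.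
by move=> x y /succn_inj /val_inj.
Qed.

Lemma iter_cyclic_wrap : e n.+1 = n.
Proof. by have := iter_porbit s m; rewrite card_porbit_cyclic => ->. Qed.

Lemma iter_cyclic_eq k l : k <= n -> l <= n -> (e k == e l) = (k == l).
Proof.
move=> le_kn le_ln; rewrite val_eqE.
rewrite -(@nth_traject _ s k n.+1 le_kn m) -(@nth_traject _ s l n.+1 le_ln m).
by rewrite nth_uniq ?size_traject ?uniq_traject_cyclic.
Qed.

Lemma pair_count_hat_gt0P (Q : nat -> nat -> nat -> nat -> bool) :
  reflect (exists a b, [/\ a.+2 <= b, b < n & Q (e a).+1 (e a.+1).+1 (e b).+1 (e b.+1).+1])
    (0 < pair_count (hat s) (fun i j =>
       Q (wat (hat s) i) (wat (hat s) i.+1) (wat (hat s) j) (wat (hat s) j.+1))).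
Proof.
apply: (iffP (pair_count_gt0P _ _)); rewrite size_hat_cyclic.
  case=> -[|a] [[|b] [// _ /andP[ab bn] Qab]]; exists a, b.
  by split; [lia | lia | rewrite -!wat_hat_cyclic //; lia].
case=> a [b [ab bn Qab]]; exists a.+1, b.+1; split=> //; first lia.
by rewrite !wat_hat_cyclic //; lia.
Qed.

Lemma N_23_end_hat_gt0P :
  reflect (exists2 a, a < n & [&& e n < e a & e a < e a.+1]) (0 < N_23_end (hat s)).
Proof.
apply: (iffP (sum_nat_gt0P _ _ _)); rewrite size_hat_cyclic.
  case=> -[|a] // /andP[_ an]; rewrite lt0b !wat_hat_cyclic; try lia; rewrite !ltnS.
  by exists a.
case=> a an ea; exists a.+1; first lia.
by rewrite lt0b !wat_hat_cyclic ?ltnS //; lia.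
Qed.

Lemma iter_cyclic_surj (x : 'I_n.+1) : exists2 k, k <= n & x = iter k s m.
Proof.
have := porbit_cyclic x m; rewrite porbit_traject card_porbit_cyclic.
by case/trajectP => k le_kn ->; exists k.
Qed.

Lemma cyclic_no_fixpoint (x : 'I_n.+1) : 0 < x -> s x != x.
Proof.
move=> x_gt0; have := uniq_traject_porbit s x; rewrite card_porbit_cyclic /=.
case/andP => x_notin _; apply: contra x_notin => /eqP sx.
by apply/trajectP; exists 0; [have := ltn_ord x; lia | rewrite /= sx].
Qed.

Lemma witness321_iter a b : witness321 s (iter a s m) (iter b s m) =
  [&& e a < e b, e b.+1 < e a.+1 & (e b < e b.+1) || (e a.+1 < e a)].
Proof. by []. Qed.

Lemma witness_N_witness_gt0 a b : a <= n -> b <= n ->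
  witness321 s (iter a s m) (iter b s m) -> 0 < N_witness (hat s).
Proof.
rewrite witness321_iter /N_witness => le_an le_bn /and3P[eab eba exc_def].
have := ltn_ord (iter a s m); have := ltn_ord (iter a.+1 s m).
have := ltn_ord (iter b s m); have := ltn_ord (iter b.+1 s m); move=> *.
have wrap := iter_cyclic_wrap.
have [lt_ab | lt_ba] : a < b \/ b < a.
  have : a != b by apply: contraTneq eab => ->; rewrite ltnn.
  lia.
- have lt_bn : b < n.
    by rewrite ltn_neqAle le_bn andbT; apply: contraTneq eba => ->; rewrite wrap; lia.
  have ab2 : a.+2 <= b.
    rewrite ltn_neqAle lt_ab andbT; apply/eqP => eb.
    by move: eab eba exc_def; rewrite -eb; lia.
  case/orP: exc_def => [exc | def].
  + suff : 0 < N_14_23 (hat s) by lia.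
    apply/(pair_count_hat_gt0P (fun x x' y y' => [&& x < y, y < y' & y' < x'])).
    by exists a, b; split=> //; lia.
  + suff : 0 < N_32_41 (hat s) by lia.
    apply/(pair_count_hat_gt0P (fun x x' y y' => [&& y' < x', x' < x & x < y])).
    by exists a, b; split=> //; lia.
- case/orP: exc_def => [exc | def].
  + have [ea | ne_an] := eqVneq a n.
      suff : 0 < N_23_end (hat s) by lia.
      by move: ea eab lt_ba => -> eab lt_bn; apply/N_23_end_hat_gt0P; exists b; lia.
    have ba2 : b.+2 <= a.
      by rewrite ltn_neqAle lt_ba andbT; apply/eqP => ea; move: eab eba; rewrite -ea; lia.
    suff : 0 < N_23_14 (hat s) by lia.
    apply/(pair_count_hat_gt0P (fun x x' y y' => [&& y < x, x < x' & x' < y'])).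
    by exists b, a; split=> //; lia.
  + have lt_an : a < n.
      rewrite ltn_neqAle le_an andbT; apply: contraTneq def => ->.
      by rewrite wrap -leqNgt -ltnS ltn_ord.
    have ba2 : b.+2 <= a.
      by rewrite ltn_neqAle lt_ba andbT; apply/eqP => ea; move: eba def; rewrite -ea; lia.
    suff : 0 < N_41_32 (hat s) by lia.
    apply/(pair_count_hat_gt0P (fun x x' y y' => [&& x' < y', y' < y & y < x])).
    by exists b, a; split=> //; lia.
Qed.

Lemma N_witness_gt0_witness :
  0 < N_witness (hat s) -> [exists x, exists y, witness321 s x y].
Proof.
have witness_at a b :
    [&& e a < e b, e b.+1 < e a.+1 & (e b < e b.+1) || (e a.+1 < e a)] ->
    [exists x, exists y, witness321 s x y].
  by move=> wab; apply/existsP; exists (iter a s m); apply/existsP; exists (iter b s m).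
rewrite /N_witness !addn_gt0 => /orP[/orP[/orP[/orP[] | ] | ] | ].
- case/(pair_count_hat_gt0P (fun x x' y y' => [&& x < y, y < y' & y' < x'])).
  by move=> a [b [_ _ pat]]; apply: (witness_at a b); lia.
- case/(pair_count_hat_gt0P (fun x x' y y' => [&& x' < y', y' < y & y < x])).
  by move=> a [b [_ _ pat]]; apply: (witness_at b a); lia.
- case/(pair_count_hat_gt0P (fun x x' y y' => [&& y < x, x < x' & x' < y'])).
  by move=> a [b [_ _ pat]]; apply: (witness_at b a); lia.
- case/(pair_count_hat_gt0P (fun x x' y y' => [&& y' < x', x' < x & x < y])).
  by move=> a [b [_ _ pat]]; apply: (witness_at a b); lia.
case/N_23_end_hat_gt0P => a lt_an pat; apply: (witness_at n a).
have : e a.+1 != n by rewrite -[n in _ != n]/(e 0) iter_cyclic_eq.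
by rewrite iter_cyclic_wrap; have := ltn_ord (iter a.+1 s m); lia.
Qed.

Lemma witness_cyclic : [exists x, exists y, witness321 s x y] = (0 < N_witness (hat s)).
Proof.
apply/idP/idP => [/existsP[x /existsP[y]] | /N_witness_gt0_witness //].
have [a le_an ->] := iter_cyclic_surj x; have [b le_bn ->] := iter_cyclic_surj y.
exact: witness_N_witness_gt0.
Qed.
End Cyclic.

Section Main.
Variables (n : nat) (s : 'S_n.+1).

Lemma hat_head_cyclic : wat (hat s) 1 = n.+1 <-> is_cyclic s.
Proof. by split=> [/cyclic_of_hat_head // | s_cyclic]; rewrite wat_hat_cyclic. Qed.

Lemma avoid321_cyclic : is_cyclic s -> ~~ contains321 s = (N_witness (hat s) == 0).
Proof.
move=> s_cyclic.
by rewrite (contains321_witness (cyclic_no_fixpoint s_cyclic)) witness_cyclic // lt0n negbK.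
Qed.

Lemma in_C321_iff (Z : int) : (is_cyclic s -> Z = Posz (N_witness (hat s))) ->
  in_C321 s <-> wat (hat s) 1 = n.+1 /\ Z = 0%R.
Proof.
rewrite hat_head_cyclic /in_C321 => Z_witness; split=> [/andP[s_cyclic] | [s_cyclic]].
  by rewrite avoid321_cyclic // Z_witness // => /eqP->.
by rewrite s_cyclic avoid321_cyclic // Z_witness // => -[->].
Qed.
End Main.

Unset Implicit Arguments.
Local Open Scope ring_scope.

Theorem mainTheorem3 (n : nat) (hn : (1 <= n)%N) (s : 'S_n) :
  (in_C321 s <->
     (wat (hat s) 1 = n /\
      (N_2_31 (hat s))%:Z + (N_14_23 (hat s))%:Z + (N_41_32 (hat s))%:Z
        - (N_24_13 (hat s))%:Z - (N_31_42 (hat s))%:Z = 0))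
  /\
  (in_C321 s <->
     (wat (hat s) 1 = n /\
      (N_231 (hat s))%:Z + (N_23_41 (hat s))%:Z + (N_24_31 (hat s))%:Z
        + (N_32_41 (hat s))%:Z + (N_14_23 (hat s))%:Z + (N_41_32 (hat s))%:Z
        - (N_24_13 (hat s))%:Z = 0)).
Proof.
case: n hn s => // n _ s.
split; apply: in_C321_iff => s_cyclic.
  exact/N_sum_B_eq_witness/uniq_hat_cyclic.
exact/N_sum_C_eq_witness/uniq_hat_cyclic.
Qed.
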